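(* Let $A$ be an $n\times n$ complex matrix with eigenvalues (counted with algebraic multiplicity) $\lambda_1,\lambda_2,\dots,\lambda_n$. Let $\mathbf{w}_1,\dots,\mathbf{w}_k$ be left eigenvectors of $A$ for the eigenvalues $\lambda_1,\dots,\lambda_k$, respectively. If $\mathbf{x}\in\mathbb{C}^n$ satisfies $\mathbf{w}_j^{*}\mathbf{x}=0$ for $j=2,\dots,k$, then the eigenvalues of $A+\mathbf{x}(\mathbf{w}_1+\cdots+\mathbf{w}_k)^{*}$, counted with multiplicity, are $\lambda_1+\mathbf{w}_1^{*}\mathbf{x},\lambda_2,\dots,\lambda_n$.
   Context: A left eigenvector $\mathbf{w}$ of $A$ for eigenvalue $\lambda$ is a nonzero vector with $\mathbf{w}^{*}A=\lambda\mathbf{w}^{*}$. *)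

From HB Require Import structures.
From mathcomp Require Import all_boot all_order all_algebra.
Set Implicit Arguments. Unset Strict Implicit. Unset Printing Implicit Defensive.
Import Order.TTheory GRing.Theory Num.Theory.
Local Open Scope ring_scope.

Definition ctrmx (C : numClosedFieldType) (m n : nat) (M : 'M[C]_(m, n)) : 'M[C]_(n, m) :=
  (map_mx Num.conj M)^T.

Definition left_eigenvector (C : numClosedFieldType) (n : nat)
  (A : 'M[C]_n) (l : C) (w : 'cV[C]_n) : Prop :=
  w != 0 /\ ctrmx w *m A = l *: ctrmx w.

From HB Require Import structures.
From mathcomp Require Import all_boot all_order all_algebra.
From mathcomp Require Import ring.
Set Implicit Arguments. Unset Strict Implicit. Unset Printing Implicit Defensive.
Import Order.TTheory GRing.Theory Num.Theory.
Local Open Scope ring_scope.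

(* By the matrix determinant lemma, the characteristic polynomial of a rank-one
   update A + u r is char_poly A - r adj(X - A) u.  A left eigenvector r_i of A
   for lambda_i is a left eigenvector of adj(X - A) for prod_(j != i) (X - lambda_j),
   so for r = sum_i r_i the correction is sum_i (r_i u) prod_(j != i) (X - lambda_j);
   when r_i u = 0 for i > 1 only the i = 1 term survives, and it merges with the
   factor X - lambda_1 into X - (lambda_1 + r_1 u). *)

Lemma det_sub_rank1 (R : comPzRingType) n (M : 'M[R]_n) (u : 'cV_n) (r : 'rV_n) :
  GRing.lreg (\det M) -> \det (M - u *m r) = \det M - (r *m \adj M *m u) 0 0.
Proof.
set d := \det M => reg_d.
pose D := block_mx (1 : 'M_1) r u M.
have detD : \det D = \det (M - u *m r).
  have -> : D = block_mx 1 0 u 1 *m block_mx 1 r 0 (M - u *m r).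
    rewrite mulmx_block ?mul0mx ?mul1mx ?mulmx0 ?mulmx1 ?addr0 ?add0r.
    by rewrite addrC subrK.
  by rewrite det_mulmx det_lblock det_ublock !det1 !mul1r.
(* Right multiplication by the adjugate block column triangularizes D. *)
have DE : D *m block_mx (d%:M : 'M_1) 0 (- (\adj M *m u)) d%:M
          = block_mx (d%:M - r *m \adj M *m u) (d *: r) 0 (d *: M).
  rewrite mulmx_block ?mulmx0 ?addr0 ?mul1mx ?mulmxN ?add0r !mulmxA.
  by rewrite mul_mx_adj !mul_mx_scalar mul_scalar_mx subrr.
have := congr1 determinant DE.
rewrite det_mulmx det_lblock det_ublock !det_scalar1 detZ det_scalar det_mx11.
rewrite !mxE eqxx mulr1n detD -/d => eq_det.
have reg_dd : GRing.lreg (d * d ^+ n) by apply/lregM/lregX.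
apply: reg_dd.
by rewrite mulrC eq_det; ring.
Qed.

Lemma ctrmx_sum (C : numClosedFieldType) n (I : finType) (P : pred I)
    (F : I -> 'cV[C]_n) :
  ctrmx (\sum_(i | P i) F i) = \sum_(i | P i) ctrmx (F i).
Proof.
apply/matrixP => a b; rewrite !mxE !summxE rmorph_sum.
by apply: eq_bigr => i _; rewrite !mxE.
Qed.

Local Notation "M ^P" := (map_mx polyC M) (at level 2, format "M ^P").

Section CharPolyRankOneUpdate.

Variables (R : idomainType) (n : nat) (A : 'M[R]_n).

Lemma char_poly_add_rank1 (u : 'cV_n) (r : 'rV_n) :
  char_poly (A + u *m r)
    = char_poly A - (r^P *m \adj (char_poly_mx A) *m u^P) 0 0.
Proof.
rewrite /char_poly -det_sub_rank1; last exact/monic_lreg/char_poly_monic.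
by rewrite /char_poly_mx map_mxD map_mxM opprD addrA.
Qed.

Lemma char_poly_mx_left_eigen (l : R) (r : 'rV_n) :
  r *m A = l *: r -> r^P *m char_poly_mx A = ('X - l%:P) *: r^P.
Proof.
move=> rA; rewrite mulmxBr mul_mx_scalar -map_mxM rA scalerBl; congr (_ - _).
by apply/matrixP => a b; rewrite !mxE rmorphM.
Qed.

Lemma adj_char_poly_mx_left_eigen (l : R) (q : {poly R}) (r : 'rV_n) :
  r *m A = l *: r -> char_poly A = ('X - l%:P) * q ->
  r^P *m \adj (char_poly_mx A) = q *: r^P.
Proof.
move=> rA dA; apply: (scalemx_inj (negbT (polyXsubC_eq0 l))).
rewrite scalemxAl -char_poly_mx_left_eigen // -mulmxA mul_mx_adj.
by rewrite mul_mx_scalar scalerA -dA.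
Qed.

Lemma char_poly_add_rank1_sum (I : finType) (P : pred I) (l : I -> R)
    (q : I -> {poly R}) (r : I -> 'rV_n) (u : 'cV_n) :
  (forall i, P i -> r i *m A = l i *: r i) ->
  (forall i, P i -> char_poly A = ('X - (l i)%:P) * q i) ->
  char_poly (A + u *m \sum_(i | P i) r i)
    = char_poly A - \sum_(i | P i) q i * ((r i *m u) 0 0)%:P.
Proof.
move=> rA dA; rewrite char_poly_add_rank1 map_mx_sum !mulmx_suml summxE.
congr (_ - _); apply: eq_bigr => i Pi.
by rewrite (adj_char_poly_mx_left_eigen (rA i Pi) (dA i Pi)) -scalemxAl
  -map_mxM !mxE.
Qed.

End CharPolyRankOneUpdate.

Theorem theorem3p6 (C : numClosedFieldType) (n k : nat) (A : 'M[C]_n)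
  (lam : 'I_n -> C) (w : 'I_n -> 'cV[C]_n) (x : 'cV[C]_n) :
  (0 < k)%N -> (k <= n)%N ->
  char_poly A = \prod_(i < n) ('X - (lam i)%:P) ->
  (forall i : 'I_n, (i < k)%N -> left_eigenvector A (lam i) (w i)) ->
  (forall j : 'I_n, (0 < j)%N -> (j < k)%N -> ctrmx (w j) *m x = 0) ->
  char_poly (A + x *m ctrmx (\sum_(i < n | (i < k)%N) w i)) =
  \prod_(i < n)
     ('X - (if val i == 0%N
            then lam i + (ctrmx (w i) *m x) 0 0
            else lam i)%:P).
Proof.
move=> k_gt0 le_kn dA eigw wx.
pose i0 : 'I_n := Ordinal (leq_trans k_gt0 le_kn).
pose q i := \prod_(j < n | j != i) ('X - (lam j)%:P).
have dAi i : char_poly A = ('X - (lam i)%:P) * q i by rewrite dA (bigD1 i).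
have val_eq0 (i : 'I_n) : (val i == 0%N) = (i == i0).
  by apply/eqP/eqP => [?| ->]; first exact: val_inj.
rewrite ctrmx_sum (char_poly_add_rank1_sum (l := lam) (q := q)); first last.
- by move=> i _; exact: dAi.
- by move=> i /eigw [].
rewrite (bigD1 i0) //= big1 ?addr0 => [|i /andP [lt_ik ne_i_i0]]; last first.
  have i_gt0 : (0 < i)%N by rewrite lt0n val_eq0.
  by rewrite wx // mxE ?polyC0 mulr0.
rewrite (bigD1 i0) //= (dAi i0) polyCD.
rewrite (eq_bigr (fun j => 'X - (lam j)%:P)) => [|i]; last first.
  by rewrite val_eq0 => /negbTE ->.
rewrite -/(q i0); ring.
Qed.
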